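(* In the standing setup, $$\sum_{i\in\mathcal{N}}\mathrm{len}(\rho^i_{\mathrm{up}})\le 4n^2\qquad\text{and}\qquad\sum_{i\in\mathcal{N}}\mathrm{len}(\rho^i_{\mathrm{down}})\le 4n^2.$$
   Context: $\mathbb{N}=\{0,1,2,\dots\}$. A one-counter system (OCS) $\mathcal{O}$ consists of a finite set $Q$ of states, a set $T_{>0}\subseteq Q\times\{-1,0,1\}\times Q$ of non-zero transitions and a set $T_{=0}\subseteq Q\times\{0,1\}\times Q$ of zero tests. A configuration is a pair $(q,c)\in Q\times\mathbb{N}$ (state $q$, counter value $c$). A transition $t=(p,d,q)$ has source $p$, target $q$, effect $d$; it can be fired in $(p,c)$ if either $t\in T_{>0}$ and $c>0$, or $t\in T_{=0}$ and $c=0$, yielding $(q,c+d)$. A path is a sequence $(\gamma_1,t_1)\cdots(\gamma_m,t_m)$ such that, with some $\gamma_{m+1}$, firing $t_i$ in $\gamma_i$ yields $\gamma_{i+1}$ for all $i\le m$; its source is $\gamma_1$, target $\gamma_{m+1}$, length $\mathrm{len}=m$, configurations appearing on it are $\gamma_1,\dots,\gamma_{m+1}$, intermediate ones are $\gamma_2,\dots,\gamma_m$; its projection is $\mathrm{proj}=t_1\cdots t_m$ and its effect $\mathrm{eff}$ is the sum of the effects of its transitions. A sequence of transitions is consistent if each transition's target is the next one's source. A cycle is a consistent sequence of non-zero transitions starting and ending in the same state (its base state); positive/negative if its effect is positive/negative; simple if no state is visited twice except the base at start and end. The transition multigraph $G$ has vertices $Q$ and an edge $p\to q$ labelled $d$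 for each $(p,d,q)\in T_{>0}$; $\mathfrak{S}$ is the set of its SCCs and $n_S$ the number of states in $S\in\mathfrak{S}$. A cycle is contained in $S$ if all its states lie in $S$; $S$ is positively (negatively) enabled if it contains a positive (negative) cycle. For every positively enabled $S$ a simple positive cycle $\sigma^+_S$ contained in $S$ is fixed, and for every negatively enabled $T$ a simple negative cycle $\sigma^-_T$ contained in $T$. An arc is a path whose source and target have counter value $0$ and whose intermediate configurations have positive counter value. A path is low if all configurations appearing on it have counter value $<5n$, where $n=|Q|$. For $S,T\in\mathfrak{S}$, an arc $\rho$ is $(S,T)$-normal if $\rho=\rho_{\mathrm{pref}}\rho_{\mathrm{up}}\rho_{\mathrm{cap}}\rho_{\mathrm{down}}\rho_{\mathrm{suff}}$ (normal decomposition) with $\rho_{\mathrm{pref}},\rho_{\mathrm{suff}}$ low, $\mathrm{proj}(\rho_{\mathrm{up}})=(\sigma^+_S)^a$, $\mathrm{proj}(\rho_{\mathrm{down}})=(\sigma^-_T)^b$ for some $a,b\in\mathbb{N}$, the source of $\rho_{\mathrm{cap}}$ having the base state of $\sigma^+_S$ and its target the base state of $\sigma^-_T$. Writing $A=\mathrm{eff}(\sigma^+_S)$, $B=-\mathrm{eff}(\sigma^-_T)$, such a decomposition is good if: (iii) $aA\le 2\,\mathrm{len}(\rho_{\mathrm{cap}})+2\,\mathrm{lcm}(A,B)$; (iv) $bB\le 2\,\mathrm{len}(\rho_{\mathrm{cap}})+2\,\mathrm{lcm}(A,B)$; (v) no infix of $\mathrm{proj}(\rho_{\mathrm{cap}})$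 is a cycle with effect divisible by $\gcd(A,B)$; (vi) the target of $\rho_{\mathrm{up}}$ and the source of $\rho_{\mathrm{down}}$ have counter values $>n$; (vii) all configurations appearing on $\rho_{\mathrm{pref}}$ and $\rho_{\mathrm{suff}}$ together are pairwise distinct. Standing setup: $\alpha,\beta$ are configurations with counter value $0$; $\rho=\rho^1\rho^2\cdots\rho^k$ is a path from $\alpha$ to $\beta$ that has the minimum possible number of appearing configurations with counter value $0$ among all paths from $\alpha$ to $\beta$; each $\rho^i$ is an arc; $\{1,\dots,k\}=\mathcal{L}\sqcup\mathcal{N}$ where for $i\in\mathcal{L}$, $\rho^i$ is a low arc of minimum length among all low arcs with the same source and target, and for $i\in\mathcal{N}$, $\rho^i$ is $(S_i,T_i)$-normal for some $S_i,T_i\in\mathfrak{S}$ with a fixed good normal decomposition $\rho^i=\rho^i_{\mathrm{pref}}\rho^i_{\mathrm{up}}\rho^i_{\mathrm{cap}}\rho^i_{\mathrm{down}}\rho^i_{\mathrm{suff}}$. For $S,T\in\mathfrak{S}$: $\mathcal{N}_{(S,T)}=\{i\in\mathcal{N}: (S_i,T_i)=(S,T)\}$, $\mathcal{N}_{(S,\cdot)}=\{i\in\mathcal{N}:S_i=S\}$, $\mathcal{N}_{(\cdot,T)}=\{i\in\mathcal{N}:T_i=T\}$. *)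

From HB Require Import structures.
From mathcomp Require Import all_boot all_order all_algebra.
Set Implicit Arguments. Unset Strict Implicit. Unset Printing Implicit Defensive.
Import Order.TTheory GRing.Theory Num.Theory.

Definition trans (Q : finType) := (Q * int * Q)%type.
Definition conf (Q : finType) := (Q * nat)%type.

Definition tsrc (Q : finType) (t : trans Q) : Q := t.1.1.
Definition teff (Q : finType) (t : trans Q) : int := t.1.2.
Definition ttgt (Q : finType) (t : trans Q) : Q := t.2.

Record OCS (Q : finType) := MkOCS {
  Tpos : pred (trans Q);
  Tzero : pred (trans Q);
  Tpos_eff : forall t, Tpos t -> teff t \in [:: (-1)%R; 0%R; 1%R];
  Tzero_eff : forall t, Tzero t -> teff t \in [:: 0%R; 1%R] }.

Section Defs.
Variable Q : finType.
Variable O : OCS Q.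

Definition nQ := #|Q|.

Definition fireable (g : conf Q) (t : trans Q) : bool :=
  (tsrc t == g.1) &&
  ((Tpos O t && (0 < g.2)%N) || (Tzero O t && (g.2 == 0%N))).

(* result of firing t in g (meaningful when fireable g t) *)
Definition step (g : conf Q) (t : trans Q) : conf Q :=
  (ttgt t, absz (g.2%:Z + teff t)%R).

(* A path is given by its source configuration g and its projection ts;
   its configurations are then determined. *)
Fixpoint is_path (g : conf Q) (ts : seq (trans Q)) : bool :=
  if ts is t :: ts' then fireable g t && is_path (step g t) ts' else true.

Definition confs (g : conf Q) (ts : seq (trans Q)) : seq (conf Q) :=
  g :: scanl step g ts.
Definition ptarget (g : conf Q) (ts : seq (trans Q)) : conf Q := foldl step g ts.
(* intermediate configurations gamma_2, ..., gamma_m *)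
Definition inter (g : conf Q) (ts : seq (trans Q)) : seq (conf Q) :=
  behead (belast g (scanl step g ts)).
Definition peff (ts : seq (trans Q)) : int := (\sum_(t <- ts) teff t)%R.

Definition is_arc (g : conf Q) (ts : seq (trans Q)) : bool :=
  [&& is_path g ts, g.2 == 0%N, (ptarget g ts).2 == 0%N &
      all (fun c : conf Q => 0 < c.2)%N (inter g ts)].

Definition is_low (g : conf Q) (ts : seq (trans Q)) : bool :=
  all (fun c : conf Q => c.2 < 5 * nQ)%N (confs g ts).

Definition consistent (ts : seq (trans Q)) : bool :=
  sorted (fun t t' : trans Q => ttgt t == tsrc t') ts.

Definition is_cycle (ts : seq (trans Q)) : bool :=
  [&& all (Tpos O) ts, consistent ts &
      if ts is t :: _ then tsrc t == ttgt (last t ts) else false].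

Definition base_state (ts : seq (trans Q)) : option Q := omap (@tsrc Q) (ohead ts).

Definition is_simple_cycle (ts : seq (trans Q)) : bool :=
  is_cycle ts && uniq (map (@tsrc Q) ts).

Definition edge : rel Q :=
  fun p q => has (fun d : int => Tpos O (p, d, q)) [:: (-1)%R; 0%R; 1%R].

Definition is_SCC (S : {set Q}) : Prop :=
  exists p, S = [set q | connect edge p q && connect edge q p].

Definition contained_in (S : {set Q}) (ts : seq (trans Q)) : bool :=
  all (fun t => (tsrc t \in S) && (ttgt t \in S)) ts.

Definition pos_enabled (S : {set Q}) : Prop :=
  exists ts, [&& is_cycle ts, contained_in S ts & (0 < peff ts)%R].
Definition neg_enabled (S : {set Q}) : Prop :=
  exists ts, [&& is_cycle ts, contained_in S ts & (peff ts < 0)%R].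

Record ndec := NDec {
  npref : seq (trans Q); nup : seq (trans Q); ncap : seq (trans Q);
  ndown : seq (trans Q); nsuff : seq (trans Q); na : nat; nb : nat }.

Variables (sigp sigm : {set Q} -> seq (trans Q)).

Definition fixed_cycles : Prop :=
  (forall S, is_SCC S -> pos_enabled S ->
     [&& is_simple_cycle (sigp S), contained_in S (sigp S) & (0 < peff (sigp S))%R]) /\
  (forall T, is_SCC T -> neg_enabled T ->
     [&& is_simple_cycle (sigm T), contained_in T (sigm T) & (peff (sigm T) < 0)%R]).

Definition normal_dec (S T : {set Q}) (g : conf Q) (ts : seq (trans Q)) (D : ndec) : Prop :=
  let g1 := ptarget g (npref D) in
  let g2 := ptarget g1 (nup D) in
  let g3 := ptarget g2 (ncap D) in
  let g4 := ptarget g3 (ndown D) in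
  (is_SCC S /\ is_SCC T) /\ (pos_enabled S /\ neg_enabled T) /\
  ts = npref D ++ nup D ++ ncap D ++ ndown D ++ nsuff D /\
  (is_low g (npref D) /\ is_low g4 (nsuff D)) /\
  (nup D = flatten (nseq (na D) (sigp S)) /\ ndown D = flatten (nseq (nb D) (sigm T))) /\
  (Some g2.1 = base_state (sigp S) /\ Some g3.1 = base_state (sigm T)).

(* conditions (iii)-(vii) of a good normal decomposition *)
Definition good_dec (S T : {set Q}) (g : conf Q) (D : ndec) : Prop :=
  let A := absz (peff (sigp S)) in
  let B := absz (peff (sigm T)) in
  let g1 := ptarget g (npref D) in
  let g2 := ptarget g1 (nup D) in
  let g3 := ptarget g2 (ncap D) in
  let g4 := ptarget g3 (ndown D) in
  [/\ (na D * A <= 2 * size (ncap D) + 2 * lcmn A B)%N,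
      (nb D * B <= 2 * size (ncap D) + 2 * lcmn A B)%N,
      (forall s, infix s (ncap D) -> is_cycle s -> ~~ ((gcdn A B)%:Z %| peff s)%Z),
      ((nQ < g2.2)%N /\ (nQ < g3.2)%N) &
      uniq (confs g (npref D) ++ confs g4 (nsuff D))].

End Defs.

From HB Require Import structures.
From mathcomp Require Import all_boot all_order all_algebra zify.
Import Order.TTheory GRing.Theory Num.Theory.
Set Implicit Arguments. Unset Strict Implicit. Unset Printing Implicit Defensive.

(* By the minimality of the number of zero
   configurations on [rho], two configurations on the middle parts (up, cap,
   down) of arcs [i < j] never share a state and a counter value modulo
   [gcd(A_{S_i}, B_{T_j})]: pumping [sigma+] in [rho^i] and [sigma-] in [rho^j]
   (Bezout) would otherwise join them into a path skipping the zeros in between.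
   Inside a single cap such a repetition would enclose a cycle with effect
   divisible by [gcd(A, B)], which (v) excludes. Hence the caps of the arcs with
   [S_i = S] have total length at most [n A_S], and at most [gcd(A_S, B_T)]
   arcs have [(S_i, T_i) = (S, T)], so that the sum of the [lcm(A_S, B_{T_i})]
   is at most [A_S n]. With (iii) this gives [sum_{S_i = S} a_i <= 4 n], and
   summing [a_i |S_i|] over the disjoint SCCs yields [4 n^2]. The down parts are
   symmetric, using (iv). *)

Section Paths.
Variables (Q : finType) (O : OCS Q).
Implicit Types (g : conf Q) (ts s : seq (trans Q)) (t : trans Q) (l : seq (conf Q)).

Definition pos_confs l := all (fun c : conf Q => 0 < c.2)%N l.
Definition zeros l := count (fun c : conf Q => c.2 == 0)%N l.
Definition lift_conf (d : nat) g : conf Q := (g.1, g.2 + d)%N.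

Lemma pos_confs_cat l1 l2 : pos_confs (l1 ++ l2) = pos_confs l1 && pos_confs l2.
Proof. exact: all_cat. Qed.

Lemma pos_confs_lift d l : (0 < d)%N -> pos_confs (map (lift_conf d) l).
Proof. by move=> d_gt0; rewrite /pos_confs all_map; apply/allP => c _ /=; lia. Qed.

Lemma zeros_cat l1 l2 : zeros (l1 ++ l2) = (zeros l1 + zeros l2)%N.
Proof. exact: count_cat. Qed.

Lemma ptarget_cat g s1 s2 : ptarget g (s1 ++ s2) = ptarget (ptarget g s1) s2.
Proof. exact: foldl_cat. Qed.

Lemma is_path_cat g s1 s2 :
  is_path O g (s1 ++ s2) = is_path O g s1 && is_path O (ptarget g s1) s2.
Proof. by elim: s1 g => [|t s1 IH] g //=; rewrite IH andbA. Qed.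

Lemma scanl_path_cat g s1 s2 :
  scanl (@step Q) g (s1 ++ s2) = scanl (@step Q) g s1 ++ scanl (@step Q) (ptarget g s1) s2.
Proof. exact: scanl_cat. Qed.

Lemma ptarget_state g ts : (ptarget g ts).1 = last g.1 (map (@ttgt Q) ts).
Proof. by elim: ts g => [|t ts IH] g //=; rewrite IH. Qed.

Lemma is_path_src g t ts : is_path O g (t :: ts) -> tsrc t = g.1.
Proof. by case/andP => /andP[/eqP]. Qed.

Lemma is_path_consistent g ts : is_path O g ts -> consistent ts.
Proof.
case: ts g => [|t ts] //= g; elim: ts t g => [|t' ts IH] t g //= /andP[_ Hp].
by rewrite (is_path_src Hp) eqxx (IH _ _ Hp).
Qed.

Lemma Tpos_teff t : Tpos O t -> [\/ teff t = -1, teff t = 0 | teff t = 1]%R.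
Proof. by move/Tpos_eff; rewrite !inE => /or3P[] /eqP; constructor. Qed.

Lemma Tzero_teff t : Tzero O t -> teff t = 0%R \/ teff t = 1%R.
Proof. by move/Tzero_eff; rewrite !inE => /orP[] /eqP; [left | right]. Qed.

Lemma fireable_ge0 g t : fireable O g t -> (0 <= (g.2)%:Z + teff t)%R.
Proof.
case/andP => _ /orP[/andP[/Tpos_teff [] -> ?] | /andP[/Tzero_teff [] -> /eqP ->]]; lia.
Qed.

Lemma step_counter g t : fireable O g t -> ((step g t).2 : int) = ((g.2)%:Z + teff t)%R.
Proof. by move=> /fireable_ge0 ge0; rewrite /step /=; lia. Qed.

Lemma peff_cons t ts : peff (t :: ts) = (teff t + peff ts)%R.
Proof. exact: big_cons. Qed.

Lemma peff_cat s1 s2 : peff (s1 ++ s2) = (peff s1 + peff s2)%R.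
Proof. exact: big_cat. Qed.

Lemma ptarget_counter g ts : is_path O g ts ->
  ((ptarget g ts).2 : int) = ((g.2)%:Z + peff ts)%R.
Proof.
elim: ts g => [|t ts IH] g /=; first by rewrite /peff big_nil addr0.
by case/andP=> Hf /IH ->; rewrite step_counter // peff_cons addrA.
Qed.

Lemma abs_peff_le ts : all (Tpos O) ts -> (absz (peff ts) <= size ts)%N.
Proof.
elim: ts => [|t ts IH] /=; first by rewrite /peff big_nil.
by case/andP=> /Tpos_teff Ht /IH; rewrite peff_cons; case: Ht => ->; lia.
Qed.

Lemma lift_step d g t : fireable O g t -> step (lift_conf d g) t = lift_conf d (step g t).
Proof. by move=> /fireable_ge0 ge0; rewrite /step /lift_conf /=; congr pair; lia. Qed.

Lemma fireable_lift d g t : Tpos O t -> fireable O g t -> fireable O (lift_conf d g) t.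
Proof.
move=> Ht; rewrite /fireable /lift_conf /= => /andP[-> H] /=.
by case: d => [|d]; rewrite ?addn0 // Ht addnS.
Qed.

Lemma lift_path d g ts : all (Tpos O) ts -> is_path O g ts ->
  [/\ is_path O (lift_conf d g) ts,
      scanl (@step Q) (lift_conf d g) ts = map (lift_conf d) (scanl (@step Q) g ts) &
      ptarget (lift_conf d g) ts = lift_conf d (ptarget g ts)].
Proof.
elim: ts g => [|t ts IH] g //= /andP[Ht Hall] /andP[Hf Hp].
by rewrite fireable_lift // lift_step //; case: (IH _ Hall Hp) => -> -> ->.
Qed.

Lemma interE g ts : inter g ts = take (size ts).-1 (scanl (@step Q) g ts).
Proof.
rewrite /inter -(size_scanl (@step Q) g ts).
case: (scanl _ g ts) => [|y l] //=; elim: l y => [|z l IH] y //=.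
by rewrite IH.
Qed.

Lemma scanl_inter g s : s != [::] -> scanl (@step Q) g s = inter g s ++ [:: ptarget g s].
Proof.
case/lastP: s => [|s t] // _.
rewrite interE size_rcons /= -cats1 scanl_path_cat take_size_cat ?size_scanl //.
by rewrite ptarget_cat.
Qed.

Lemma inter_cat g s1 s2 : s2 != [::] ->
  inter g (s1 ++ s2) = scanl (@step Q) g s1 ++ inter (ptarget g s1) s2.
Proof.
case: s2 => [|t s2] // _; rewrite !interE scanl_path_cat size_cat take_cat size_scanl.
by rewrite ifF /=; [congr (_ ++ take _ _); lia | lia].
Qed.

Lemma pos_inter_cat g s1 s2 : pos_confs (scanl (@step Q) g s1) ->
  pos_confs (inter (ptarget g s1) s2) -> pos_confs (inter g (s1 ++ s2)).
Proof.
case: s2 => [|t s2] H1 H2; last by rewrite inter_cat // pos_confs_cat H1.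
by rewrite cats0 interE; move: H1; rewrite -{1}(cat_take_drop (size s1).-1 (scanl _ g s1))
  pos_confs_cat => /andP[].
Qed.

Lemma pos_inter_catr g s1 s2 : pos_confs (inter g (s1 ++ s2)) ->
  pos_confs (inter (ptarget g s1) s2).
Proof. by case: s2 => [|t s2] //; rewrite inter_cat // pos_confs_cat => /andP[]. Qed.

Lemma pos_inter_catl g s1 s2 : pos_confs (inter g (s1 ++ s2)) ->
  (0 < (ptarget g s1).2)%N -> pos_confs (scanl (@step Q) g s1).
Proof.
case: s2 => [|t s2]; last by rewrite inter_cat // pos_confs_cat => /andP[].
case: s1 => [|t s1] //; rewrite cats0 => Hi Ht.
by rewrite scanl_inter // pos_confs_cat Hi /= Ht.
Qed.

Lemma zeros_inter g ts : pos_confs (inter g ts) -> (zeros (scanl (@step Q) g ts) <= 1)%N.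
Proof.
case: ts => [|t ts] // Hi; rewrite scanl_inter // zeros_cat.
have -> : zeros (inter g (t :: ts)) = 0%N.
  by apply/eqP; rewrite -leqn0 leqNgt -has_count; apply/hasPn => c /(allP Hi); case: c.2.
by rewrite /zeros /=; case: eqP.
Qed.

Lemma zeros_arc g ts : (ptarget g ts).2 = 0%N -> ts != [::] ->
  (0 < zeros (scanl (@step Q) g ts))%N.
Proof.
move=> H0 /(scanl_inter g) ->; rewrite zeros_cat /zeros /= H0 eqxx; lia.
Qed.

Lemma path_Tpos g ts : is_path O g ts -> (0 < g.2)%N -> pos_confs (inter g ts) ->
  all (Tpos O) ts.
Proof.
elim: ts g => [|t ts IH] g //= /andP[Hf Hp] g_gt0.
have Ht : Tpos O t by case/andP: Hf => _ /orP[/andP[]|/andP[_ /eqP]] //; lia.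
rewrite Ht /=; case: ts IH Hp => [|t' ts] // IH Hp.
change (pos_confs (inter g ([:: t] ++ t' :: ts)) -> all (Tpos O) (t' :: ts)).
rewrite inter_cat // pos_confs_cat => /andP[Hpos Hi]; apply: IH Hp _ Hi.
by move: Hpos; rewrite /pos_confs /= andbT.
Qed.

End Paths.

Lemma flatten_nseqS (T : Type) k (s : seq T) :
  flatten (nseq k.+1 s) = flatten (nseq k s) ++ s.
Proof. by elim: k => [|k IH] /=; rewrite ?cats0 // -catA -IH. Qed.

Lemma size_flatten_nseq (T : Type) k (s : seq T) : size (flatten (nseq k s)) = (k * size s)%N.
Proof. by elim: k => [|k IH] //=; rewrite size_cat IH mulSn. Qed.

Lemma all_flatten_nseq (T : Type) (P : pred T) k s : all P s -> all P (flatten (nseq k s)).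
Proof. by move=> H; elim: k => [|k IH] //=; rewrite all_cat H IH. Qed.

Lemma congr_mod_gcd_add (x x' A B : nat) : 0 < A -> 0 < B ->
  x = x' %[mod gcdn A B] ->
  exists k m, [/\ 0 < k, 0 < m & x + k * A = x' + m * B].
Proof.
wlog le_q : x x' A B / x %/ gcdn A B <= x' %/ gcdn A B => [hwlog A_gt0 B_gt0 Hmod |].
  have [le | /ltnW le] := leqP (x %/ gcdn A B) (x' %/ gcdn A B); first exact: hwlog.
  rewrite gcdnC in le Hmod.
  have [m [k [m_gt0 k_gt0 E]]] := hwlog _ _ _ _ le B_gt0 A_gt0 (esym Hmod).
  by exists k, m.
move=> A_gt0 B_gt0 Hmod; set g := gcdn A B in le_q Hmod.
have [a _ /dvdnP [u Hu]] := Bezoutl B A_gt0.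
set d := x' %/ g - x %/ g.
have Ex' : x' = x + d * g by rewrite (divn_eq x g) (divn_eq x' g) Hmod -(subnKC le_q) -/d; lia.
exists (d * u + B), (d * a + A); rewrite !addn_gt0 A_gt0 B_gt0 !orbT; split => //.
rewrite Ex' -/g in Hu *; nia.
Qed.

Lemma congr_modn_dvd d m x y : (d %| m)%N -> x = y %[mod m] -> x = y %[mod d].
Proof. by move=> dm Hxy; rewrite -(modn_dvdm x dm) Hxy modn_dvdm. Qed.

Section Cycles.
Variables (Q : finType) (O : OCS Q).
Implicit Types (g : conf Q) (ts s : seq (trans Q)) (t : trans Q).

Lemma cycle_props s : is_cycle O s ->
  [/\ all (Tpos O) s, consistent s &
      exists t s', s = t :: s' /\ tsrc t = ttgt (last t s')].
Proof.
case/and3P => H1 H2; case: s H1 H2 => [|t s'] // H1 H2 /eqP H3.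
by split => //; exists t, s'.
Qed.

Lemma cycle_ptarget_state s q c : is_cycle O s -> base_state s = Some q ->
  (ptarget (q, c) s).1 = q.
Proof.
case/cycle_props => _ _ [t [s' [-> Hts]]] /= [<-].
by rewrite ptarget_state /= last_map -Hts.
Qed.

Lemma size_simple_cycle s (S : {set Q}) : is_simple_cycle O s -> contained_in S s ->
  (size s <= #|S|)%N.
Proof.
case/andP => _ Hu Hc; rewrite -(size_map (@tsrc Q)) -(card_uniqP Hu).
apply/subset_leq_card/subsetP => x /mapP [t Ht ->].
by case/andP: (allP Hc t Ht).
Qed.

Definition starts_at (q : Q) ts : bool := if ts is t :: _ then tsrc t == q else true.

Lemma high_path ts q c : consistent ts -> all (Tpos O) ts -> starts_at q ts ->
  (size ts < c)%N -> is_path O (q, c) ts /\ pos_confs (scanl (@step Q) (q, c) ts).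
Proof.
elim: ts q c => [|t ts IH] q c //= Hc /andP[Ht Hall] /eqP Hq Hs.
have Hf : fireable O (q, c) t by rewrite /fireable /= Hq eqxx Ht /=; lia.
have Hcnt := step_counter Hf.
have Hpos : (size ts < (step (q, c) t).2)%N by case: (Tpos_teff Ht) Hcnt => -> /=; lia.
have Hsort : consistent ts by move: Hc; rewrite /consistent /=; apply: path_sorted.
have Hq' : starts_at (step (q, c) t).1 ts.
  by clear IH Hall Hsort Hs Hpos; case: ts Hc => [|t' ts] //= /andP[/eqP <- _].
have [Hp Hsc] := IH _ _ Hsort Hall Hq' Hpos; rewrite -surjective_pairing in Hp Hsc.
by rewrite Hf Hp Hsc andbT; split => //; rewrite andbT; apply: leq_ltn_trans Hpos.
Qed.

Lemma pump_up sg q c A : all (Tpos O) sg -> is_path O (q, c) sg ->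
  pos_confs (scanl (@step Q) (q, c) sg) -> (ptarget (q, c) sg).1 = q ->
  peff sg = Posz A -> (0 < A)%N ->
  forall k, [/\ is_path O (q, c) (flatten (nseq k sg)),
    pos_confs (scanl (@step Q) (q, c) (flatten (nseq k sg))) &
    ptarget (q, c) (flatten (nseq k sg)) = (q, c + k * A)%N].
Proof.
move=> Hall Hp Hpos Hst Heff A_gt0 k.
have Ht : ptarget (q, c) sg = (q, c + A)%N.
  apply: injective_projections => //=; apply/eqP; rewrite -eqz_nat.
  by rewrite (ptarget_counter Hp) Heff.
elim: k => [|k [Hp' Hpos' Ht']]; first by split => //=; rewrite addn0.
have [H1 H2 H3] := lift_path A (all_flatten_nseq k Hall) Hp'.
rewrite /= is_path_cat ptarget_cat scanl_path_cat Ht pos_confs_cat.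
rewrite (_ : (q, c + A)%N = lift_conf A (q, c)) // H1 H2 H3 Hp Ht' Hpos pos_confs_lift //.
by split => //; rewrite /lift_conf /=; congr pair; rewrite mulSn; lia.
Qed.

Lemma pump_down sg q y B X : all (Tpos O) sg -> is_path O (q, y + B)%N sg ->
  ptarget (q, y + B)%N sg = (q, y) -> (0 < B)%N ->
  pos_confs (inter (q, y + B)%N (sg ++ X)) ->
  forall m, [/\ is_path O (q, y + m.+1 * B)%N (flatten (nseq m.+1 sg)),
    ptarget (q, y + m.+1 * B)%N (flatten (nseq m.+1 sg)) = (q, y) &
    pos_confs (inter (q, y + m.+1 * B)%N (flatten (nseq m.+1 sg) ++ X))].
Proof.
move=> Hall Hp Ht B_gt0 Hi; elim=> [|m [IH1 IH2 IH3]]; first by rewrite /= cats0 mul1n.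
have E : (q, y + m.+2 * B)%N = lift_conf (m.+1 * B) (q, y + B)%N
  by rewrite /lift_conf /=; congr pair; rewrite mulSn; lia.
have [H1 H2 H3] := lift_path (m.+1 * B) Hall Hp.
have Ht' : ptarget (q, y + m.+2 * B)%N sg = (q, y + m.+1 * B)%N by rewrite E H3 Ht.
rewrite [flatten _]/= is_path_cat ptarget_cat Ht' IH1 IH2 -catA E H1; split => //.
by apply: pos_inter_cat; rewrite ?H2 ?pos_confs_lift -?E ?Ht' //; lia.
Qed.

End Cycles.

Section InjectiveCount.
Variables (K C : finType) (f : K -> nat) (cls : K -> nat -> C).

Definition injective_blocks (A : {pred K}) :=
  forall i j p p', i \in A -> j \in A -> (p <= f i)%N -> (p' <= f j)%N ->
    cls i p = cls j p' -> i = j /\ p = p'.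

Let blocks (I : seq K) := flatten [seq [seq cls i p | p <- iota 0 (f i).+1] | i <- I].

Lemma uniq_blocks (I : seq K) : uniq I -> injective_blocks [in I] ->
  uniq (blocks I) /\ size (blocks I) = (\sum_(i <- I) (f i).+1)%N.
Proof.
elim: I => [|i I IH]; first by rewrite big_nil.
rewrite cons_uniq => /andP[iNI uI] inj.
have injI : injective_blocks [in I].
  by move=> i0 j p p' H1 H2; apply: inj; rewrite inE ?H1 ?H2 orbT.
have [uB sB] := IH uI injI.
have -> : blocks (i :: I) = [seq cls i p | p <- iota 0 (f i).+1] ++ blocks I by [].
rewrite cat_uniq size_cat size_map size_iota uB sB big_cons andbT.
split => //; apply/andP; split.
- rewrite map_inj_in_uniq ?iota_uniq // => p p'; rewrite !mem_iota => Hp Hp' E.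
  by case: (inj i i p p' (mem_head _ _) (mem_head _ _) ltac:(lia) ltac:(lia) E).
- apply/hasPn => y /flattenP [s /mapP [j Hj ->] /mapP [p' Hp' ->]].
  apply/negP => /mapP [p Hp E]; rewrite !mem_iota in Hp Hp'.
  have Hj' : j \in i :: I by rewrite inE Hj orbT.
  have [Eij _] := inj i j p p' (mem_head _ _) Hj' ltac:(lia) ltac:(lia) (esym E).
  by move: iNI; rewrite Eij Hj.
Qed.

Lemma sum_blocks_le_card (A : {pred K}) : injective_blocks A ->
  (\sum_(i in A) (f i).+1 <= #|C|)%N.
Proof.
move=> inj; rewrite -big_enum.
have injE : injective_blocks [in enum A] by move=> i j p p'; rewrite !mem_enum; apply: inj.
have [uB <-] := uniq_blocks (enum_uniq A) injE.
by rewrite cardE; apply: uniq_leq_size uB _ => x _; rewrite mem_enum.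
Qed.

End InjectiveCount.

Section SCC.
Variables (Q : finType) (O : OCS Q).

Lemma SCC_mem (S : {set Q}) p : is_SCC O S -> p \in S ->
  S = [set q | connect (edge O) p q && connect (edge O) q p].
Proof.
case=> r ->; rewrite inE => /andP[Hrp Hpr]; apply/setP => q; rewrite !inE.
apply/andP/andP => -[H1 H2]; split; by [
  exact: connect_trans Hpr H1 | exact: connect_trans H2 Hrp |
  exact: connect_trans Hrp H1 | exact: connect_trans H2 Hpr].
Qed.

Lemma disjoint_SCC (S T : {set Q}) : is_SCC O S -> is_SCC O T -> S != T -> [disjoint S & T].
Proof.
move=> HS HT; apply: contraNT => /pred0Pn [x /andP[HxS HxT]].
by rewrite (SCC_mem HS HxS) (SCC_mem HT HxT).
Qed.

Lemma sum_card_SCC (P : {set {set Q}}) : {in P, forall S, is_SCC O S} ->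
  (\sum_(S in P) #|S| <= #|Q|)%N.
Proof.
move=> HP; have /eqP -> : trivIset P.
  by apply/trivIsetP => S T HS HT; apply: disjoint_SCC; [exact: HP | exact: HP].
exact: max_card.
Qed.

Lemma leq_sum_by_SCC (I : finType) (J : {pred I}) (key : I -> {set Q}) (F : I -> nat) c :
  (forall i, i \in J -> is_SCC O (key i)) ->
  (forall i, i \in J -> \sum_(j in J | key j == key i) F j <= c * #|key i|)%N ->
  (\sum_(i in J) F i <= c * #|Q|)%N.
Proof.
move=> HSCC Hkey; rewrite (partition_big_imset key).
apply: (@leq_trans (\sum_(S in key @: J) c * #|S|)).
  by apply: leq_sum => _ /imsetP [i Hi ->]; apply: Hkey.
rewrite -big_distrr leq_mul2l sum_card_SCC ?orbT // => _ /imsetP [i Hi ->].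
exact: HSCC.
Qed.

End SCC.

(* The counting argument, for the up parts with [key i = S_i], [key' i = T_i],
   [e = A], [e' = B], [x i = a_i], [cyc S = |sigma+_S|]; for the down parts the
   roles of [S] and [T], [A] and [B], [a] and [b] are exchanged. *)
Section ClassCounting.
Variables (Q : finType) (O : OCS Q) (I : finType) (inN : pred I).
Variables (key key' : I -> {set Q}) (e e' cyc : {set Q} -> nat) (cap x part : I -> nat).

Definition class (k : I -> {set Q}) (K : {set Q}) := [set i | inN i & k i == K].

Hypothesis key_SCC : forall i, inN i -> is_SCC O (key i).
Hypothesis key'_SCC : forall i, inN i -> is_SCC O (key' i).
Hypothesis card_class_pair : forall K K',
  (#|class key K :&: class key' K'| <= gcdn (e K) (e' K'))%N.
Hypothesis e_gt0 : forall i, inN i -> (0 < e (key i))%N.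
Hypothesis e'_le : forall i, inN i -> (e' (key' i) <= #|key' i|)%N.
Hypothesis sum_cap_class_le : forall K, (\sum_(i in class key K) (cap i).+1 <= #|Q| * e K)%N.
Hypothesis x_le : forall i, inN i ->
  (x i * e (key i) <= 2 * cap i + 2 * lcmn (e (key i)) (e' (key' i)))%N.
Hypothesis part_eq : forall i, inN i -> part i = (x i * cyc (key i))%N.
Hypothesis cyc_le : forall i, inN i -> (cyc (key i) <= #|key i|)%N.

Lemma in_class k K i : i \in class k K -> inN i /\ k i = K.
Proof. by rewrite inE => /andP[-> /eqP]. Qed.

Lemma sum_lcm_class_le K :
  (\sum_(i in class key K) lcmn (e K) (e' (key' i)) <= e K * #|Q|)%N.
Proof.
apply: (leq_sum_by_SCC (O := O) (key := key')) => i /in_class[Ni _]; first exact: key'_SCC.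
rewrite (eq_bigr (fun _ => lcmn (e K) (e' (key' i)))) => [|j /andP[_ /eqP ->] //].
rewrite (eq_bigl [in class key K :&: class key' (key' i)]) => [|j]; last first.
  by rewrite !inE; case: (inN j).
rewrite sum_nat_const (leq_trans (leq_mul (card_class_pair _ _) (leqnn _))) //.
by rewrite mulnC muln_lcm_gcd leq_mul2l e'_le ?orbT.
Qed.

Lemma sum_class_pumps_le K : (\sum_(i in class key K) x i <= 4 * #|Q|)%N.
Proof.
have [-> | [i0 /in_class[N0 <-]]] := set_0Vmem (class key K); first by rewrite big_set0.
rewrite -(leq_pmul2r (e_gt0 N0)) big_distrl /=.
apply: (@leq_trans (\sum_(i in class key (key i0))
   (2 * cap i + 2 * lcmn (e (key i0)) (e' (key' i))))).
  by apply: leq_sum => i /in_class[Ni <-]; apply: x_le.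
rewrite big_split /= -!big_distrr /=.
have Hc : (\sum_(i in class key (key i0)) cap i <= #|Q| * e (key i0))%N.
  by apply: leq_trans (sum_cap_class_le _); apply: leq_sum => i _.
have := sum_lcm_class_le (key i0).
move: Hc; set c := \sum_(i in _) cap i; set l := \sum_(i in _) lcmn _ _; set n := #|Q|; nia.
Qed.

Lemma sum_part_le : (\sum_(i | inN i) part i <= 4 * #|Q| ^ 2)%N.
Proof.
rewrite (eq_bigl [in [set i | inN i]]) => [|i]; last by rewrite inE.
rewrite expnS expn1 mulnA.
apply: (leq_sum_by_SCC (O := O) (key := key)) => [i | i]; rewrite inE => Ni.
  exact: key_SCC.
rewrite (eq_bigl [in class key (key i)]) => [|j]; last by rewrite !inE.
rewrite (eq_bigr (fun j => x j * cyc (key i)))%N => [|j /in_class[Nj <-]]; last exact: part_eq.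
by rewrite -big_distrl leq_mul ?sum_class_pumps_le ?cyc_le.
Qed.

End ClassCounting.

Section NormalArcs.
Variables (Q : finType) (O : OCS Q) (sigp sigm : {set Q} -> seq (trans Q))
  (alpha beta : conf Q) (rhos : seq (seq (trans Q))) (isN : pred nat)
  (SS TT : nat -> {set Q}) (D : nat -> ndec Q).
Implicit Types (g : conf Q) (ts s : seq (trans Q)).

Hypothesis fixedP : fixed_cycles O sigp sigm.
Hypothesis rhos_path : is_path O alpha (flatten rhos).
Hypothesis rhos_target : ptarget alpha (flatten rhos) = beta.
Hypothesis rhos_min : forall ts, is_path O alpha ts -> ptarget alpha ts = beta ->
  (zeros (confs alpha (flatten rhos)) <= zeros (confs alpha ts))%N.
Hypothesis rhos_arc : forall i, (i < size rhos)%N ->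
  is_arc O (ptarget alpha (flatten (take i rhos))) (nth [::] rhos i).
Hypothesis rhos_normal : forall i, (i < size rhos)%N -> isN i ->
  let g := ptarget alpha (flatten (take i rhos)) in
  normal_dec O sigp sigm (SS i) (TT i) g (nth [::] rhos i) (D i) /\
  good_dec O sigp sigm (SS i) (TT i) g (D i).

Definition in_N i := (i < size rhos)%N && isN i.
Definition rho i := nth [::] rhos i.
Definition arc_src i := ptarget alpha (flatten (take i rhos)).
Definition up_eff S := absz (peff (sigp S)).
Definition down_eff T := absz (peff (sigm T)).
Definition up_src i := ptarget (arc_src i) (npref (D i)).
Definition cap_src i := ptarget (up_src i) (nup (D i)).
Definition down_src i := ptarget (cap_src i) (ncap (D i)).
Definition suff_src i := ptarget (down_src i) (ndown (D i)).
Definition middle i := nup (D i) ++ ncap (D i) ++ ndown (D i).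

Lemma arc_props i : (i < size rhos)%N ->
  [/\ is_path O (arc_src i) (rho i), (ptarget (arc_src i) (rho i)).2 = 0%N &
      pos_confs (inter (arc_src i) (rho i))].
Proof. by move/rhos_arc => /and4P[? _ /eqP ? ?]. Qed.

Lemma arc_src_succ i : (i < size rhos)%N -> arc_src i.+1 = ptarget (arc_src i) (rho i).
Proof.
by move=> Hi; rewrite /arc_src (take_nth [::] Hi) -cats1 flatten_cat ptarget_cat /= cats0.
Qed.

Lemma normal_props i : in_N i ->
  [/\ [/\ is_SCC O (SS i), is_SCC O (TT i), pos_enabled O (SS i) & neg_enabled O (TT i)],
      rho i = npref (D i) ++ middle i ++ nsuff (D i),
      nup (D i) = flatten (nseq (na (D i)) (sigp (SS i))) /\
        ndown (D i) = flatten (nseq (nb (D i)) (sigm (TT i))),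
      Some (cap_src i).1 = base_state (sigp (SS i)) /\
        Some (down_src i).1 = base_state (sigm (TT i)) &
      [/\ (na (D i) * up_eff (SS i) <=
             2 * size (ncap (D i)) + 2 * lcmn (up_eff (SS i)) (down_eff (TT i)))%N,
      (nb (D i) * down_eff (TT i) <=
             2 * size (ncap (D i)) + 2 * lcmn (up_eff (SS i)) (down_eff (TT i)))%N,
      (forall s, infix s (ncap (D i)) -> is_cycle O s ->
         ~~ ((gcdn (up_eff (SS i)) (down_eff (TT i)))%:Z %| peff s)%Z) &
      (#|Q| < (cap_src i).2)%N /\ (#|Q| < (down_src i).2)%N]].
Proof.
case/andP=> Hi Hn; case: (rhos_normal Hi Hn) => [[[? ?] [[? ?] [E [_ [? ?]]]]] [? ? ? ? _]].
by split; rewrite // /rho E /middle -!catA.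
Qed.

Lemma up_cycle_props i : in_N i ->
  [/\ is_cycle O (sigp (SS i)), peff (sigp (SS i)) = Posz (up_eff (SS i)),
      (0 < up_eff (SS i))%N, (size (sigp (SS i)) <= #|SS i|)%N & all (Tpos O) (sigp (SS i))].
Proof.
case/normal_props => -[HS _ HpS _] _ _ _ _; case/and3P: (fixedP.1 _ HS HpS) => Hsc Hc.
have [Hcy _] := andP Hsc; have [Hall _ _] := cycle_props Hcy.
by rewrite /up_eff (size_simple_cycle Hsc Hc); case: (peff _).
Qed.

Lemma down_cycle_props i : in_N i ->
  [/\ is_cycle O (sigm (TT i)), peff (sigm (TT i)) = (- Posz (down_eff (TT i)))%R,
      (0 < down_eff (TT i))%N, (size (sigm (TT i)) <= #|TT i|)%N &
      all (Tpos O) (sigm (TT i))].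
Proof.
case/normal_props => -[_ HT _ HnT] _ _ _ _; case/and3P: (fixedP.2 _ HT HnT) => Hsc Hc.
have [Hcy _] := andP Hsc; have [Hall _ _] := cycle_props Hcy.
by rewrite /down_eff (size_simple_cycle Hsc Hc); case: (peff _) => // B; rewrite NegzE.
Qed.

Lemma arc_split i : in_N i ->
  [/\ is_path O (arc_src i) (npref (D i)), is_path O (up_src i) (middle i),
      ptarget (up_src i) (middle i) = suff_src i,
      is_path O (suff_src i) (nsuff (D i)) &
      ptarget (suff_src i) (nsuff (D i)) = ptarget (arc_src i) (rho i)].
Proof.
move=> Ni; have [Hi _] := andP Ni; have [Hp _ _] := arc_props Hi.
have [_ E _ _ _] := normal_props Ni.
have Em : ptarget (up_src i) (middle i) = suff_src i by rewrite /middle !ptarget_cat.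
move: Hp; rewrite E is_path_cat -/(up_src i) is_path_cat Em => /and3P[H1 H2 H3].
by rewrite ptarget_cat -/(up_src i) ptarget_cat Em.
Qed.

Lemma middle_nonempty i : in_N i -> middle i ++ nsuff (D i) != [::].
Proof.
move=> Ni; apply/eqP => E.
have [_ Er _ _ [_ _ _ [Hcap _]]] := normal_props Ni.
have [Hi _] := andP Ni; have [_ H0 _] := arc_props Hi.
have Eup : nup (D i) = [::] by move: E; rewrite /middle; case: (nup _).
have Ecap : cap_src i = ptarget (arc_src i) (rho i) by rewrite Er E cats0 /cap_src Eup.
by move: Hcap; rewrite Ecap H0.
Qed.

Lemma middle_props i : in_N i ->
  [/\ all (Tpos O) (middle i), pos_confs (scanl (@step Q) (arc_src i) (npref (D i))),
      pos_confs (inter (up_src i) (middle i ++ nsuff (D i))),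
      Some (up_src i).1 = base_state (sigp (SS i)) &
      Some (suff_src i).1 = base_state (sigm (TT i))].
Proof.
move=> Ni; have [_ Er [Hup Hdn] [Hb2 Hb3] [_ _ _ [Hc2 _]]] := normal_props Ni.
have [Hcp _ _ _ Htp] := up_cycle_props Ni; have [Hcm _ _ _ Htm] := down_cycle_props Ni.
have [Hi _] := andP Ni; have [_ _ Hpos] := arc_props Hi.
have [_ Hmid Em Hsuff _] := arc_split Ni.
have Hrest : is_path O (up_src i) (middle i ++ nsuff (D i)) by rewrite is_path_cat Hmid Em.
move: Hpos; rewrite Er => Hpos.
have Hpos1 := pos_inter_catr Hpos.
have Hpref : pos_confs (scanl (@step Q) (arc_src i) (npref (D i))).
  have := middle_nonempty Ni; case: (middle i ++ nsuff (D i)) Hpos => [|t s] // Hpos _.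
  by rewrite inter_cat // pos_confs_cat in Hpos; case/andP: Hpos.
have Hcap : all (Tpos O) (ncap (D i) ++ ndown (D i) ++ nsuff (D i)).
  apply: (path_Tpos _ (leq_ltn_trans (leq0n _) Hc2)).
  - by move: Hrest; rewrite /middle -!catA is_path_cat -/(cap_src i) => /andP[_].
  - by move: Hpos1; rewrite /middle -!catA => /(pos_inter_catr (s1 := nup (D i))).
split => //.
- rewrite /middle !all_cat Hup Hdn !all_flatten_nseq //=.
  by move: Hcap; rewrite all_cat => /andP[->].
- case: (cycle_props Hcp) => _ _ [t [s' [Ht _]]].
  case: (na (D i)) Hup => [|k] Hup; first by rewrite -Hb2 /cap_src Hup.
  move: Hmid; rewrite /middle Hup /= Ht /= => /andP[/andP[/eqP H _] _].
  by rewrite /base_state /= H.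
- case: (cycle_props Hcm) => _ _ [t [s' [Ht Hts]]].
  case: (nb (D i)) Hdn => [|k] Hdn; first by rewrite -Hb3 /suff_src Hdn.
  rewrite /suff_src Hdn flatten_nseqS ptarget_cat ptarget_state Ht /= last_map -Hts.
  by move: Hb3; rewrite Ht.
Qed.

(* The first traversal of [sigma+] after [npref]: it exists even when [na = 0],
   since [cap_src] is then high enough. *)
Lemma up_first i : in_N i ->
  is_path O (up_src i) (sigp (SS i)) /\ pos_confs (scanl (@step Q) (up_src i) (sigp (SS i))).
Proof.
move=> Ni; have [_ _ [Hup _] _ [_ _ _ [Hc2 _]]] := normal_props Ni.
have [Hcp Heff A_gt0 Hsz Htp] := up_cycle_props Ni.
have [_ _ Hpos Hs1 _] := middle_props Ni; have [_ Hmid _ _ _] := arc_split Ni.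
have [_ Hcons [t [s' [Ht _]]]] := cycle_props Hcp.
case: (na (D i)) Hup => [|k] Hup.
- have Hsrc : starts_at (up_src i).1 (sigp (SS i)).
    by move: Hs1; rewrite Ht /base_state /= => -[->]; rewrite /= eqxx.
  have Hlt : (size (sigp (SS i)) < (up_src i).2)%N.
    by move: Hc2; rewrite /cap_src Hup => /(leq_ltn_trans (leq_trans Hsz (max_card _))).
  by have := high_path Hcons Htp Hsrc Hlt; rewrite -surjective_pairing.
- have Hp : is_path O (up_src i) (sigp (SS i)).
    by move: Hmid; rewrite /middle Hup /= -!catA is_path_cat => /andP[].
  split => //; apply: (pos_inter_catl (s2 := flatten (nseq k (sigp (SS i))) ++
    ncap (D i) ++ ndown (D i) ++ nsuff (D i))).
    by move: Hpos; rewrite /middle Hup /= -!catA.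
  by have := ptarget_counter Hp; rewrite Heff; lia.
Qed.

Lemma down_last i : in_N i ->
  let y := (suff_src i).2 in let q := (suff_src i).1 in
  [/\ is_path O (q, y + down_eff (TT i))%N (sigm (TT i)),
      ptarget (q, y + down_eff (TT i))%N (sigm (TT i)) = (q, y) &
      pos_confs (inter (q, y + down_eff (TT i))%N (sigm (TT i) ++ nsuff (D i)))].
Proof.
move=> Ni /=; have [_ _ [_ Hdn] _ [_ _ _ [_ Hc3]]] := normal_props Ni.
have [Hcm Heff _ Hsz Htm] := down_cycle_props Ni.
have [_ _ Hpos _ Hs4] := middle_props Ni; have [_ Hmid Em _ _] := arc_split Ni.
have [_ Hcons [t [s' [Ht Hts]]]] := cycle_props Hcm.
have Hsrc : tsrc t = (suff_src i).1 by move: Hs4; rewrite Ht /base_state /= => -[->].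
have Hsuff := pos_inter_catr (s1 := middle i) Hpos; rewrite Em in Hsuff.
case: (nb (D i)) Hdn => [|k] Hdn.
- have Eg : suff_src i = down_src i by rewrite /suff_src Hdn.
  have Hlt : (size (sigm (TT i)) < (suff_src i).2 + down_eff (TT i))%N.
    by rewrite Eg; have := max_card (TT i); lia.
  have Hsrc' : starts_at (suff_src i).1 (sigm (TT i)) by rewrite Ht /= Hsrc eqxx.
  have [Hp Hpos'] := high_path Hcons Htm Hsrc' Hlt.
  have Htg : ptarget ((suff_src i).1, (suff_src i).2 + down_eff (TT i))%N (sigm (TT i)) =
             ((suff_src i).1, (suff_src i).2).
    apply: injective_projections => /=.
    + by apply: (cycle_ptarget_state (O := O)) => //; rewrite -Hs4.
    + by apply/eqP; rewrite -eqz_nat (ptarget_counter Hp) Heff /=; apply/eqP; lia.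
  by split => //; apply: pos_inter_cat => //; rewrite Htg -surjective_pairing.
- set F := flatten (nseq k (sigm (TT i))); set h := ptarget (down_src i) F.
  have Hdn' : ndown (D i) = F ++ sigm (TT i) by rewrite Hdn flatten_nseqS.
  have Hph : is_path O h (sigm (TT i)).
    move: Hmid; rewrite /middle is_path_cat -/(cap_src i) is_path_cat -/(down_src i).
    by rewrite Hdn' is_path_cat => /and3P[_ _ /andP[]].
  have Hth : ptarget h (sigm (TT i)) = suff_src i by rewrite /suff_src Hdn' ptarget_cat.
  have Hh1 : h.1 = (suff_src i).1 by move: Hph; rewrite Ht => /is_path_src <-.
  have Hh2 : h.2 = ((suff_src i).2 + down_eff (TT i))%N.
    have := ptarget_counter Hph; rewrite Hth Heff => Hc.
    by apply/eqP; rewrite -eqz_nat; apply/eqP; lia.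
  have Eh : ((suff_src i).1, (suff_src i).2 + down_eff (TT i))%N = h.
    by rewrite -Hh1 -Hh2 -surjective_pairing.
  rewrite Eh Hth -surjective_pairing; split => //.
  have -> : h = ptarget (up_src i) (nup (D i) ++ ncap (D i) ++ F).
    by rewrite /h /down_src /cap_src !ptarget_cat.
  by apply: pos_inter_catr; move: Hpos; rewrite /middle Hdn' -!catA.
Qed.

Definition mid_at i p := ptarget (up_src i) (take p (middle i)).

Lemma pumped_prefix i p k : in_N i -> (0 < k)%N ->
  let X := npref (D i) ++ flatten (nseq k (sigp (SS i))) ++ take p (middle i) in
  [/\ is_path O (arc_src i) X,
      ptarget (arc_src i) X = lift_conf (k * up_eff (SS i)) (mid_at i p) &
      pos_confs (scanl (@step Q) (arc_src i) X)].
Proof.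
move=> Ni k_gt0 X; have [Hpref Hmid _ _ _] := arc_split Ni.
have [HT Hpos0 _ Hs1 _] := middle_props Ni; have [Hup1 Hup1pos] := up_first Ni.
have [Hcp Heff A_gt0 _ Htp] := up_cycle_props Ni.
have E1 : up_src i = ((up_src i).1, (up_src i).2) by rewrite -surjective_pairing.
have Hsq : (ptarget (up_src i) (sigp (SS i))).1 = (up_src i).1.
  by rewrite E1; apply: (cycle_ptarget_state (O := O)); rewrite // -Hs1.
rewrite E1 in Hup1 Hup1pos Hsq.
have [Hpu1 Hpu2 Hpu3] := pump_up Htp Hup1 Hup1pos Hsq Heff A_gt0 k.
rewrite -E1 (_ : (_, _) = lift_conf (k * up_eff (SS i)) (up_src i)) // in Hpu1 Hpu2 Hpu3.
have Htake : is_path O (up_src i) (take p (middle i)).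
  by move: Hmid; rewrite -{1}(cat_take_drop p (middle i)) is_path_cat => /andP[].
have Htake_all : all (Tpos O) (take p (middle i)).
  by move: HT; rewrite -{1}(cat_take_drop p (middle i)) all_cat => /andP[].
have [Hl1 Hl2 Hl3] := lift_path (k * up_eff (SS i)) Htake_all Htake.
rewrite /X is_path_cat Hpref -/(up_src i) is_path_cat Hpu1 Hpu3 Hl1.
rewrite !ptarget_cat -/(up_src i) Hpu3 Hl3 !scanl_path_cat -/(up_src i) Hpu3 Hl2.
by rewrite !pos_confs_cat Hpos0 Hpu2 pos_confs_lift // muln_gt0 k_gt0.
Qed.

Lemma pumped_suffix j p m : in_N j ->
  let Y := drop p (middle j) ++ flatten (nseq m.+1 (sigm (TT j))) ++ nsuff (D j) in
  let g := lift_conf (m.+1 * down_eff (TT j)) (mid_at j p) in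
  [/\ is_path O g Y, ptarget g Y = arc_src j.+1 & pos_confs (inter g Y)].
Proof.
move=> Nj Y g; have [Hj _] := andP Nj.
have [_ Hmid Em Hsuff Hend] := arc_split Nj; have [HT _ _ _ _] := middle_props Nj.
have [_ _ B_gt0 _ Htm] := down_cycle_props Nj; have [Hd1 Hd2 Hd3] := down_last Nj.
have [Hpd1 Hpd2 Hpd3] := pump_down Htm Hd1 Hd2 B_gt0 Hd3 m.
have Hdrop : is_path O (mid_at j p) (drop p (middle j)).
  by move: Hmid; rewrite -{1}(cat_take_drop p (middle j)) is_path_cat => /andP[].
have Hdrop_all : all (Tpos O) (drop p (middle j)).
  by move: HT; rewrite -{1}(cat_take_drop p (middle j)) all_cat => /andP[].
have [Hl1 Hl2 Hl3] := lift_path (m.+1 * down_eff (TT j)) Hdrop_all Hdrop.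
rewrite /mid_at -ptarget_cat cat_take_drop Em -/(mid_at j p) in Hl3.
rewrite -/g in Hl1 Hl2 Hl3.
have El : ((suff_src j).1, (suff_src j).2 + m.+1 * down_eff (TT j))%N =
          lift_conf (m.+1 * down_eff (TT j)) (suff_src j) by [].
rewrite El in Hpd1 Hpd2 Hpd3.
rewrite /Y is_path_cat Hl1 Hl3 is_path_cat Hpd1 Hpd2 -surjective_pairing Hsuff.
rewrite ptarget_cat Hl3 ptarget_cat Hpd2 -surjective_pairing Hend -arc_src_succ //.
split => //.
by apply: pos_inter_cat; rewrite ?Hl2 ?pos_confs_lift ?muln_gt0 // Hl3.
Qed.

Definition zeros_before u := zeros (scanl (@step Q) alpha (flatten (take u rhos))).

Lemma zeros_before_succ u : (u < size rhos)%N ->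
  zeros_before u.+1 = (zeros_before u + zeros (scanl (@step Q) (arc_src u) (rho u)))%N.
Proof.
move=> Hu; rewrite /zeros_before (take_nth [::] Hu) -cats1 flatten_cat.
by rewrite scanl_path_cat zeros_cat /= cats0.
Qed.

Lemma zeros_arc_N_gt0 u : in_N u -> (0 < zeros (scanl (@step Q) (arc_src u) (rho u)))%N.
Proof.
move=> Nu; have [Hu _] := andP Nu; have [_ H0 _] := arc_props Hu.
apply: zeros_arc H0 _; have [_ -> _ _ _] := normal_props Nu.
by have := middle_nonempty Nu; case: (middle _ ++ _) => //; case: (npref _).
Qed.

Lemma leq_zeros_before u v : (u <= v <= size rhos)%N -> (zeros_before u <= zeros_before v)%N.
Proof.
case/andP=> + Hv; elim: v Hv => [|v IH] Hv; first by rewrite leqn0 => /eqP ->.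
rewrite leq_eqVlt => /orP[/eqP -> // | /IH Hle].
by rewrite zeros_before_succ // (leq_trans (Hle (ltnW Hv))) ?leq_addr.
Qed.

(* Replacing [rho^i ... rho^j] by a path with at most one zero configuration
   would contradict the minimality of [rho], since arcs [i] and [j] each end
   in a zero configuration. *)
Lemma no_shortcut i j X : (i < j)%N -> in_N i -> in_N j ->
  is_path O (arc_src i) X -> ptarget (arc_src i) X = arc_src j.+1 ->
  (zeros (scanl (@step Q) (arc_src i) X) <= 1)%N -> False.
Proof.
move=> lt_ij Ni Nj HX HXt HXz; have [Hj _] := andP Nj.
have Hsplit u : flatten rhos = flatten (take u rhos) ++ flatten (drop u rhos).
  by rewrite -flatten_cat cat_take_drop.
set P := flatten (take i rhos); set R := flatten (drop j.+1 rhos).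
have HP : is_path O alpha P by move: rhos_path; rewrite (Hsplit i) is_path_cat => /andP[].
have HR : is_path O (arc_src j.+1) R.
  by move: rhos_path; rewrite (Hsplit j.+1) is_path_cat => /andP[].
have HRt : ptarget (arc_src j.+1) R = beta by rewrite -rhos_target (Hsplit j.+1) ptarget_cat.
have := rhos_min (ts := P ++ X ++ R).
rewrite !is_path_cat HP -/(arc_src i) HX HXt HR !ptarget_cat -/(arc_src i) HXt HRt.
rewrite /confs /zeros /= -!/(zeros _) (Hsplit j.+1) !scanl_path_cat !zeros_cat.
rewrite -/(arc_src i) HXt -/(arc_src j.+1) -/R -/(zeros_before i) -/(zeros_before j.+1).
move=> /(_ isT erefl).
have := zeros_before_succ (ltn_trans lt_ij Hj); have := zeros_before_succ Hj.
have := @leq_zeros_before i.+1 j; rewrite lt_ij (ltnW Hj) => /(_ isT).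
have := zeros_arc_N_gt0 Ni; have := zeros_arc_N_gt0 Nj; lia.
Qed.

(* Two positions on the middle parts of arcs [i < j] in the same state and with
   counters congruent modulo [gcd(A_i, B_j)] can be joined, after pumping
   [sigma+] in arc [i] and [sigma-] in arc [j], into a shortcut. *)
Lemma no_merge i j p p' : (i < j)%N -> in_N i -> in_N j ->
  (mid_at i p).1 = (mid_at j p').1 ->
  (mid_at i p).2 = (mid_at j p').2 %[mod gcdn (up_eff (SS i)) (down_eff (TT j))] ->
  False.
Proof.
move=> lt_ij Ni Nj Hst Hmod.
have [_ _ A_gt0 _ _] := up_cycle_props Ni; have [_ _ B_gt0 _ _] := down_cycle_props Nj.
have [k [[|m] [k_gt0 // _ Hkm]]] := congr_mod_gcd_add A_gt0 B_gt0 Hmod.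
have [HX1 HX2 HX3] := pumped_prefix p Ni k_gt0.
have [HY1 HY2 HY3] := pumped_suffix p' m Nj.
have Ejoin : lift_conf (k * up_eff (SS i)) (mid_at i p) =
             lift_conf (m.+1 * down_eff (TT j)) (mid_at j p') by rewrite /lift_conf Hst Hkm.
rewrite -Ejoin in HY1 HY2 HY3; rewrite -HX2 in HY1 HY2 HY3.
apply: (no_shortcut lt_ij Ni Nj
  (X := (npref (D i) ++ flatten (nseq k (sigp (SS i))) ++ take p (middle i)) ++
        drop p' (middle j) ++ flatten (nseq m.+1 (sigm (TT j))) ++ nsuff (D j))).
- by rewrite is_path_cat HX1 HY1.
- by rewrite ptarget_cat HY2.
- exact/zeros_inter/pos_inter_cat.
Qed.

Definition cap_at i p := ptarget (cap_src i) (take p (ncap (D i))).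

Lemma mid_at_cap i p : (p <= size (ncap (D i)))%N ->
  mid_at i (size (nup (D i)) + p) = cap_at i p.
Proof.
move=> Hp; rewrite /mid_at /middle takeD take_size_cat // drop_size_cat // ptarget_cat.
rewrite take_cat; case: ltnP => // H.
have -> : p = size (ncap (D i)) by apply/eqP; rewrite eqn_leq Hp H.
by rewrite subnn take0 cats0 /cap_at take_size.
Qed.

(* Two positions of a cap in the same state enclose a cycle, whose effect is
   the difference of their counters. *)
Lemma cap_no_repeat i p p' M : in_N i -> (p < p' <= size (ncap (D i)))%N ->
  (gcdn (up_eff (SS i)) (down_eff (TT i)) %| M)%N ->
  (cap_at i p).1 = (cap_at i p').1 -> (cap_at i p).2 = (cap_at i p').2 %[mod M] -> False.
Proof.
move=> Ni /andP[lt_pp' Hp'] Hg Hst Hmod.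
have [_ _ _ _ [_ _ no_cycle _]] := normal_props Ni.
have [HT _ _ _ _] := middle_props Ni; have [_ Hmid _ _ _] := arc_split Ni.
set cap := ncap (D i) in Hp' no_cycle Hst Hmod *.
have Hcap : is_path O (cap_src i) cap.
  by move: Hmid; rewrite /middle is_path_cat -/(cap_src i) is_path_cat => /andP[_ /andP[]].
have cap_all : all (Tpos O) cap by move: HT; rewrite /middle !all_cat => /and3P[].
set s := drop p (take p' cap).
have Es : take p' cap = take p cap ++ s.
  by rewrite -{1}(cat_take_drop p (take p' cap)) take_takel // ltnW.
have Hs : is_path O (cap_at i p) s.
  move: Hcap; rewrite -(cat_take_drop p' cap) Es -catA is_path_cat => /andP[_].
  by rewrite is_path_cat => /andP[].
have Hst' : ptarget (cap_at i p) s = cap_at i p' by rewrite /cap_at Es ptarget_cat.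
have Hsz : size s = (p' - p)%N by rewrite /s size_drop size_takel.
have Hcyc : is_cycle O s.
  apply/and3P; split; last 1 first.
  - case E: s Hs Hsz Hst' => [|t s'] Hs /= Hsz Hst'; first by lia.
    by rewrite (is_path_src Hs) Hst -Hst' ptarget_state /= last_map.
  - by move: cap_all; rewrite -(cat_take_drop p' cap) Es !all_cat => /andP[/andP[_ ->]].
  - exact: is_path_consistent Hs.
have /negP := no_cycle s (infix_trans (infix_drop _ _) (infix_take _ _)) Hcyc; apply.
rewrite dvdzE (_ : peff s = (Posz (cap_at i p').2 - Posz (cap_at i p).2)%R); last first.
  by rewrite -Hst' (ptarget_counter Hs) addrC addKr.
apply: dvdn_trans Hg _; move: Hmod; case: (leqP (cap_at i p).2 (cap_at i p').2) => H.
- by rewrite distnEl // => /eqP; rewrite eq_sym (eqn_mod_dvd _ H).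
- by rewrite (distnEr (ltnW H)) => /eqP; rewrite (eqn_mod_dvd _ (ltnW H)).
Qed.

Lemma sum_cap_le (J : {pred 'I_(size rhos)}) M : (0 < M)%N ->
  (forall i, i \in J -> isN i) ->
  (forall i j, i \in J -> j \in J -> gcdn (up_eff (SS i)) (down_eff (TT j)) %| M)%N ->
  (\sum_(i in J) (size (ncap (D i))).+1 <= #|Q| * M)%N.
Proof.
move=> M_gt0 JN Jgcd; rewrite -(card_ord M) -card_prod.
have NJ (i : 'I_(size rhos)) : i \in J -> in_N i by move=> Ji; rewrite /in_N ltn_ord JN.
pose cls i p := ((cap_at i p).1, Ordinal (ltn_pmod (cap_at i p).2 M_gt0)).
have no_cross (i j : 'I_(size rhos)) p p' : i \in J -> j \in J ->
    (p <= size (ncap (D i)))%N -> (p' <= size (ncap (D j)))%N -> (i < j)%N ->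
    cls i p = cls j p' -> False.
  move=> Ji Jj Hp Hp' lt_ij [Hst Hmod].
  apply: (no_merge (p := size (nup (D i)) + p) (p' := size (nup (D j)) + p') lt_ij);
    rewrite ?mid_at_cap ?NJ //.
  exact: congr_modn_dvd (Jgcd _ _ Ji Jj) Hmod.
apply: (sum_blocks_le_card (f := fun i : 'I_(size rhos) => size (ncap (D i))) (cls := cls)).
move=> i j p p' Ji Jj Hp Hp' E.
case: (ltngtP i j) => [lt_ij | lt_ji | /val_inj eq_ij].
- by case: (no_cross i j p p').
- by case: (no_cross j i p' p).
subst j; split => //; case: E => Hst Hmod.
have Hdvd := Jgcd _ _ Ji Ji.
case: (ltngtP p p') => [lt_pp' | lt_p'p | //].
- by case: (cap_no_repeat (NJ _ Ji) _ Hdvd Hst Hmod); rewrite lt_pp'.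
- by case: (cap_no_repeat (NJ _ Ji) _ Hdvd (esym Hst) (esym Hmod)); rewrite lt_p'p.
Qed.

Lemma card_NS_NT (S T : {set Q}) :
  (#|[set i : 'I_(size rhos) | isN i & SS i == S] :&:
     [set i : 'I_(size rhos) | isN i & TT i == T]|
     <= gcdn (up_eff S) (down_eff T))%N.
Proof.
set J := _ :&: _.
have inJ (i : 'I_(size rhos)) : i \in J -> [/\ in_N i, SS i = S & TT i = T].
  by rewrite !inE /in_N ltn_ord => /andP[/andP[-> /eqP ->] /andP[_ /eqP ->]].
have [-> | [i0 /inJ[N0 ES0 _]]] := set_0Vmem J; first by rewrite cards0.
have [_ _ A_gt0 _ _] := up_cycle_props N0; rewrite ES0 in A_gt0.
have g_gt0 : (0 < gcdn (up_eff S) (down_eff T))%N by rewrite gcdn_gt0 A_gt0.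
rewrite -(card_ord (gcdn _ _)).
apply: (@leq_card_in _ _ (fun i : 'I_(size rhos) => Ordinal (ltn_pmod (up_src i).2 g_gt0))).
have no_cross (i j : 'I_(size rhos)) : i \in J -> j \in J -> (i < j)%N ->
    (up_src i).2 = (up_src j).2 %[mod gcdn (up_eff S) (down_eff T)] -> False.
  move=> /inJ[Ni ESi _] /inJ[Nj ESj ETj] lt_ij Hmod.
  apply: (no_merge (p := 0) (p' := 0) lt_ij Ni Nj); rewrite /mid_at !take0 //.
    have [_ _ _ Hi _] := middle_props Ni; have [_ _ _ Hj _] := middle_props Nj.
    by move: Hj; rewrite ESj -ESi -Hi => -[].
  by rewrite ESi ETj.
move=> i j Ji Jj /(congr1 val) /= Hmod.
case: (ltngtP i j) => [lt_ij | lt_ji | /val_inj //].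
- by case: (no_cross i j).
- by case: (no_cross j i).
Qed.

Lemma ord_in_N (i : 'I_(size rhos)) : isN i -> in_N i.
Proof. by rewrite /in_N ltn_ord. Qed.

Lemma sum_up_le : (\sum_(i < size rhos | isN i) size (nup (D i)) <= 4 * #|Q| ^ 2)%N.
Proof.
apply: (@sum_part_le _ O _ (fun i : 'I_(size rhos) => isN i) (fun i => SS i) (fun i => TT i)
  up_eff down_eff (fun S => size (sigp S)) (fun i => size (ncap (D i))) (fun i => na (D i))).
- by move=> i /ord_in_N/normal_props[[]].
- by move=> i /ord_in_N/normal_props[[]].
- exact: card_NS_NT.
- by move=> i /ord_in_N/up_cycle_props[].
- by move=> i /ord_in_N/down_cycle_props[_ _ _ Hsz /abs_peff_le/leq_trans]; apply.
- move=> K; have [-> | [i0 /in_class[/ord_in_N N0 <-]]] :=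
    set_0Vmem (class (fun i : 'I_(size rhos) => isN i) (fun i => SS i) K).
    by rewrite big_set0.
  have [_ _ A_gt0 _ _] := up_cycle_props N0.
  by apply: sum_cap_le => // [i /in_class[] | i j /in_class[_ ->] _]; rewrite ?dvdn_gcdl.
- by move=> i /ord_in_N/normal_props[_ _ _ _ []].
- by move=> i /ord_in_N/normal_props[_ _ [-> _] _ _]; rewrite size_flatten_nseq.
- by move=> i /ord_in_N/up_cycle_props[].
Qed.

Lemma sum_down_le : (\sum_(i < size rhos | isN i) size (ndown (D i)) <= 4 * #|Q| ^ 2)%N.
Proof.
apply: (@sum_part_le _ O _ (fun i : 'I_(size rhos) => isN i) (fun i => TT i) (fun i => SS i)
  down_eff up_eff (fun T => size (sigm T)) (fun i => size (ncap (D i))) (fun i => nb (D i))).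
- by move=> i /ord_in_N/normal_props[[]].
- by move=> i /ord_in_N/normal_props[[]].
- by move=> K K'; rewrite setIC gcdnC; apply: card_NS_NT.
- by move=> i /ord_in_N/down_cycle_props[].
- by move=> i /ord_in_N/up_cycle_props[_ _ _ Hsz /abs_peff_le/leq_trans]; apply.
- move=> K; have [-> | [i0 /in_class[/ord_in_N N0 <-]]] :=
    set_0Vmem (class (fun i : 'I_(size rhos) => isN i) (fun i => TT i) K).
    by rewrite big_set0.
  have [_ _ B_gt0 _ _] := down_cycle_props N0.
  by apply: sum_cap_le => // [i /in_class[] | i j _ /in_class[_ ->]]; rewrite ?dvdn_gcdr.
- by move=> i /ord_in_N/normal_props[_ _ _ _ [_ + _ _]]; rewrite lcmnC.
- by move=> i /ord_in_N/normal_props[_ _ [_ ->] _ _]; rewrite size_flatten_nseq.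
- by move=> i /ord_in_N/down_cycle_props[].
Qed.

End NormalArcs.

Theorem lemma7 (Q : finType) (O : OCS Q) (sigp sigm : {set Q} -> seq (trans Q))
  (alpha beta : conf Q) (rhos : seq (seq (trans Q))) (isN : pred nat)
  (SS TT : nat -> {set Q}) (D : nat -> ndec Q) :
  fixed_cycles O sigp sigm ->
  alpha.2 = 0%N -> beta.2 = 0%N ->
  is_path O alpha (flatten rhos) -> ptarget alpha (flatten rhos) = beta ->
  (forall ts, is_path O alpha ts -> ptarget alpha ts = beta ->
     (count (fun c : conf Q => c.2 == 0%N) (confs alpha (flatten rhos))
      <= count (fun c : conf Q => c.2 == 0%N) (confs alpha ts))%N) ->
  (forall i, (i < size rhos)%N ->
     is_arc O (ptarget alpha (flatten (take i rhos))) (nth [::] rhos i)) ->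
  (forall i, (i < size rhos)%N -> ~~ isN i ->
     let g := ptarget alpha (flatten (take i rhos)) in
     is_low g (nth [::] rhos i) /\
     forall ts, is_arc O g ts -> is_low g ts ->
       ptarget g ts = ptarget g (nth [::] rhos i) ->
       (size (nth [::] rhos i) <= size ts)%N) ->
  (forall i, (i < size rhos)%N -> isN i ->
     let g := ptarget alpha (flatten (take i rhos)) in
     normal_dec O sigp sigm (SS i) (TT i) g (nth [::] rhos i) (D i) /\
     good_dec O sigp sigm (SS i) (TT i) g (D i)) ->
  (\sum_(i < size rhos | isN i) size (nup (D i)) <= 4 * #|Q| ^ 2)%N /\
  (\sum_(i < size rhos | isN i) size (ndown (D i)) <= 4 * #|Q| ^ 2)%N.
Proof.
move=> fixedP _ _ rhos_path rhos_target rhos_min rhos_arc _ rhos_normal.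
split; [exact: (sum_up_le fixedP rhos_path rhos_target rhos_min rhos_arc rhos_normal)
       | exact: (sum_down_le fixedP rhos_path rhos_target rhos_min rhos_arc rhos_normal)].
Qed.
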